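(* Let $m,n\ge 1$ and let $k>0$ and $l$ be fixed integers. Let $P,Q$ be constant $n\times n$ complex matrices, let $\mathfrak{R}(P)$ be a finite set of distinct invertible constant $n\times n$ matrices $\Lambda$ with $-(\Lambda^{k}+\Lambda^{k-l})=P$, and let $\mathfrak{R}(Q)$ be a finite set of distinct invertible constant $n\times n$ matrices $\tilde\Lambda$ with $-(\tilde\Lambda^{k}+\tilde\Lambda^{k-l})=Q$. For each $\Lambda\in\mathfrak{R}(P)$ let $A_\Lambda$ be a constant $m\times n$ matrix, for each $\tilde\Lambda\in\mathfrak{R}(Q)$ let $B_{\tilde\Lambda}$ be a constant $n\times m$ matrix, and for each pair let $X_{\tilde\Lambda,\Lambda}$ be a constant $n\times n$ matrix satisfying $\tilde\Lambda^{-l}X_{\tilde\Lambda,\Lambda}\Lambda^{l}-X_{\tilde\Lambda,\Lambda}=B_{\tilde\Lambda}A_\Lambda$. Let $\tilde\omega=\tilde\omega(t)$ be a differentiable $n\times n$ matrix function of $t$ only with $Q\,\tilde\omega=\tilde\omega\,P$, and set $\gamma_2=-\tilde\omega_t$. Define $$\theta=\sum_{\Lambda\in\mathfrak{R}(P)}A_\Lambda e^{\Lambda^l t}\Lambda^j,\qquad \eta=\sum_{\tilde\Lambda\in\mathfrak{R}(Q)}e^{-\tilde\Lambda^l t}\tilde\Lambda^{-j}B_{\tilde\Lambda},$$ $$\tilde\Omega=\sum_{\Lambda\in\mathfrak{R}(P),\,\tilde\Lambda\in\mathfrak{R}(Q)}e^{-\tilde\Lambda^l t}\tilde\Lambda^{-j}X_{\tilde\Lambda,\Lambda}e^{\Lambda^l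 t}\Lambda^j+\tilde\omega,$$ and assume $\tilde\Omega$ is invertible. Let $\varphi_0$ be a constant $m\times m$ matrix. Then $$\varphi=\varphi_0+\theta\,\tilde\Omega^{-1}\eta_{(-l)},\qquad \hat q=-\theta\,\tilde\Omega^{-1}\gamma_2,\qquad \tilde r=-\tilde\Omega_{(l)}^{-1}\eta$$ solve the system $$(\varphi_{(k)}-\varphi)_t+(\varphi_{(k)}-\varphi+I)(\varphi_{(l)}-\varphi)_{(k-l)}-(\varphi_{(l)}-\varphi)(\varphi_{(k)}-\varphi+I)=(\hat q\,\tilde r_{(-l)})_{(k)}-\hat q\,\tilde r_{(-l)},$$ $$\hat q_{(k)}=-(\varphi_{(k)}-\varphi+I)\,\hat q_{(k-l)}-\hat q\,P,\qquad \tilde r_{(-l)}=-\tilde r\,(\varphi_{(k)}-\varphi+I)-P\,\tilde r_{(k-l)}.$$ Consequently $W=\varphi_{(1)}-\varphi+\frac1k I$ together with $\hat q,\tilde r$ solves $$\Big(\sum_{i=0}^{k-1}W_{(i)}\Big)_t+\sum_{i=0}^{k-1}W_{(i)}\sum_{i=k-l}^{k-1}W_{(i)}-\sum_{i=0}^{l-1}W_{(i)}\sum_{i=0}^{k-1}W_{(i)}=(\hat q\,\tilde r_{(-l)})_{(k)}-\hat q\,\tilde r_{(-l)},$$ $$\hat q_{(k)}=-\sum_{i=0}^{k-1}W_{(i)}\,\hat q_{(k-l)}-\hat q\,P,\qquad \tilde r_{(-l)}=-\tilde r\sum_{i=0}^{k-1}W_{(i)}-P\,\tilde r_{(k-l)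}.$$
   Context: All dependent variables are matrix-valued functions of a continuous variable $t$ and a discrete variable $j\in\mathbb{Z}$; subscript $t$ denotes the derivative with respect to $t$, and for an integer $s$, $f_{(s)}(t,j)=f(t,j+s)$ denotes the shifted function. $I$ denotes the identity matrix. *)

From HB Require Import structures.
From mathcomp Require Import all_boot all_order all_algebra.
From mathcomp Require Import complex.
From mathcomp Require Import all_classical all_reals.
From mathcomp Require Import topology normedtype sequences derive.
Set Implicit Arguments.
Unset Strict Implicit.
Unset Printing Implicit Defensive.
Import Order.TTheory GRing.Theory Num.Theory.
Import numFieldNormedType.Exports.
Local Open Scope ring_scope.
Local Open Scope complex_scope.

Definition cderivable {R : realType} (f : R -> R[i]) (t : R) : Prop :=
  derivable (fun s : R => complex.Re (f s)) t 1 /\ derivable (fun s : R => complex.Im (f s)) t 1.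

Definition cderive {R : realType} (f : R -> R[i]) (t : R) : R[i] :=
  (derive1 (fun s : R => complex.Re (f s)) t) +i* (derive1 (fun s : R => complex.Im (f s)) t).

Definition mderivable {R : realType} {a b : nat} (F : R -> 'M[R[i]]_(a, b)) (t : R) : Prop :=
  forall i j, cderivable (fun s : R => F s i j) t.

Definition mderive {R : realType} {a b : nat} (F : R -> 'M[R[i]]_(a, b)) (t : R)
  : 'M[R[i]]_(a, b) :=
  \matrix_(i, j) cderive (fun s : R => F s i j) t.

Definition mexp_partial {R : realType} {n : nat} (M : 'M[R[i]]_n.+1) (N : nat)
  : 'M[R[i]]_n.+1 :=
  \sum_(p < N) (((p`!)%:R : R[i])^-1 *: M ^+ p).

Definition mexp {R : realType} {n : nat} (M : 'M[R[i]]_n.+1) : 'M[R[i]]_n.+1 :=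
  \matrix_(i, j)
    ((limn (fun N => complex.Re (mexp_partial M N i j))) +i*
     (limn (fun N => complex.Im (mexp_partial M N i j)))).

(* Oriented integer-indexed sum: isum a b f = sum_{i=a}^{b-1} f i if a <= b,
   and - sum_{i=b}^{a-1} f i if b < a (so that isum a b + isum b c = isum a c). *)
Definition isum {V : zmodType} (a b : int) (f : int -> V) : V :=
  if (a <= b)%R then \sum_(i < `|b - a|%N) f (a + i%:Z)%R
  else - \sum_(i < `|b - a|%N) f (b + i%:Z)%R.

(* The relations theta_t = theta_(l), eta_t = - eta_(-l),
   theta_(k) + theta_(k-l) = - theta P and eta_(-l) + eta = - Q eta_(k-l) hold summand
   by summand, because e^(Lambda^l t) commutes with Lambda and
   - (Lambda^k + Lambda^(k-l)) = P.  The equation defining X turns Omega into a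
   Cauchy-like matrix: Omega_(l) - Omega = eta theta,
   Q Omega_(k-l) - Omega P = eta_(-l) theta_(k-l) and Omega_t = eta_(-l) theta - gamma2
   (the last two also use Q omega = omega P).  Given these relations, the three
   equations for phi, q and r are identities between sums of products of theta,
   Omega^-1, eta and gamma2, obtained as suitable linear combinations of the
   relations.  The equations for W follow because
   sum_(i = a)^(b-1) W_(i) = phi_(b) - phi_(a) + (b - a)/k I telescopes.  The matrix
   exponential is differentiated entrywise through its power series. *)

From HB Require Import structures.
From mathcomp Require Import all_boot all_order all_algebra.
From mathcomp Require Import complex.
From mathcomp Require Import all_classical all_reals.
From mathcomp Require Import topology normedtype sequences derive exp.
From mathcomp Require Import ring.
Import Order.TTheory GRing.Theory Num.Theory.
Import numFieldNormedType.Exports.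
Local Open Scope ring_scope.
Local Open Scope complex_scope.
Set Implicit Arguments.
Unset Strict Implicit.
Unset Printing Implicit Defensive.

(* Real and imaginary parts as maps [R[i] -> R] (not the ['Re], ['Im] of
   [Num.Theory], which land in [R[i]]). *)
Local Notation Re := complex.Re.
Local Notation Im := complex.Im.

(** * Derivatives of complex and matrix functions of a real variable *)

Section ComplexDerivative.
Variable R : realType.
Implicit Types (f g : R -> R[i]) (t : R) (x y d : R[i]).

Lemma Re_add x y : Re (x + y) = Re x + Re y. Proof. by case: x; case: y. Qed.
Lemma Im_add x y : Im (x + y) = Im x + Im y. Proof. by case: x; case: y. Qed.
Lemma Re_opp x : Re (- x) = - Re x. Proof. by case: x. Qed.
Lemma Im_opp x : Im (- x) = - Im x. Proof. by case: x. Qed.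
Lemma Re_mul x y : Re (x * y) = Re x * Re y - Im x * Im y.
Proof. by case: x; case: y. Qed.
Lemma Im_mul x y : Im (x * y) = Re x * Im y + Im x * Re y.
Proof. by case: x; case: y. Qed.

Definition is_cderive t f d :=
  is_derive t 1 (fun s => Re (f s)) (Re d) /\ is_derive t 1 (fun s => Im (f s)) (Im d).

Lemma is_cderive_cderivable t f d : is_cderive t f d -> cderivable f t.
Proof. by case=> [[? _] [? _]]. Qed.

Lemma is_cderive_val t f d : is_cderive t f d -> cderive f t = d.
Proof.
by case=> dRe dIm; rewrite /cderive !derive1E !derive_val; case: d {dRe dIm}.
Qed.

Lemma cderivable_is_cderive t f : cderivable f t -> is_cderive t f (cderive f t).
Proof. by case=> /derivableP ? /derivableP ?; split; rewrite /= derive1E. Qed.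

Lemma is_cderive_cst t x : is_cderive t (fun=> x) 0.
Proof. by split; apply: is_derive_cst. Qed.

Lemma is_cderiveD t f g df dg : is_cderive t f df -> is_cderive t g dg ->
  is_cderive t (fun s => f s + g s) (df + dg).
Proof.
case=> [f1 f2] [g1 g2]; split.
  by rewrite Re_add (_ : (fun s => _) = (fun s => Re (f s)) + (fun s => Re (g s)));
    [exact: is_deriveD | apply/funext => s; rewrite Re_add].
by rewrite Im_add (_ : (fun s => _) = (fun s => Im (f s)) + (fun s => Im (g s)));
  [exact: is_deriveD | apply/funext => s; rewrite Im_add].
Qed.

Lemma is_cderiveN t f df : is_cderive t f df -> is_cderive t (fun s => - f s) (- df).
Proof.
case=> [f1 f2]; split.
  by rewrite Re_opp (_ : (fun s => _) = - (fun s => Re (f s)));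
    [exact: is_deriveN | apply/funext => s; rewrite Re_opp].
by rewrite Im_opp (_ : (fun s => _) = - (fun s => Im (f s)));
  [exact: is_deriveN | apply/funext => s; rewrite Im_opp].
Qed.

Lemma is_cderiveM t f g df dg : is_cderive t f df -> is_cderive t g dg ->
  is_cderive t (fun s => f s * g s) (df * g t + f t * dg).
Proof.
case=> [f1 f2] [g1 g2]; split.
  rewrite (_ : (fun s => _) = (fun s => Re (f s)) * (fun s => Re (g s))
                            - (fun s => Im (f s)) * (fun s => Im (g s))).
    by apply: is_derive_eq; rewrite /= Re_add !Re_mul /GRing.scale /=; ring.
  by apply/funext => s; rewrite Re_mul.
rewrite (_ : (fun s => _) = (fun s => Re (f s)) * (fun s => Im (g s))
                          + (fun s => Im (f s)) * (fun s => Re (g s))).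
  by apply: is_derive_eq; rewrite /= Im_add !Im_mul /GRing.scale /=; ring.
by apply/funext => s; rewrite Im_mul.
Qed.

Lemma is_cderive_sum (I : Type) (r : seq I) (P : pred I) (F : I -> R -> R[i]) t
    (dF : I -> R[i]) :
  (forall i, P i -> is_cderive t (F i) (dF i)) ->
  is_cderive t (fun s => \sum_(i <- r | P i) F i s) (\sum_(i <- r | P i) dF i).
Proof.
move=> dFi; elim: r => [|a r IHr].
  by rewrite big_nil (_ : (fun s => _) = fun=> 0);
    [exact: is_cderive_cst | apply/funext => s; rewrite big_nil].
rewrite big_cons (_ : (fun s => _) =
    fun s => if P a then F a s + \sum_(i <- r | P i) F i s else \sum_(i <- r | P i) F i s).
  by case: ifP => // Pa; apply: is_cderiveD => //; apply: dFi.
by apply/funext => s; rewrite big_cons.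
Qed.

Lemma cderivableM t f g : cderivable f t -> cderivable g t ->
  cderivable (fun s => f s * g s) t.
Proof.
by move=> /cderivable_is_cderive df /cderivable_is_cderive dg;
  apply: is_cderive_cderivable (is_cderiveM df dg).
Qed.

Lemma cderivable_sum (I : Type) (r : seq I) (P : pred I) (F : I -> R -> R[i]) t :
  (forall i, P i -> cderivable (F i) t) ->
  cderivable (fun s => \sum_(i <- r | P i) F i s) t.
Proof.
move=> dF; apply: (@is_cderive_cderivable _ _ (\sum_(i <- r | P i) cderive (F i) t)).
by apply: is_cderive_sum => i Pi; apply/cderivable_is_cderive/dF.
Qed.

Lemma cderivable_prod (I : Type) (r : seq I) (P : pred I) (F : I -> R -> R[i]) t :
  (forall i, P i -> cderivable (F i) t) ->
  cderivable (fun s => \prod_(i <- r | P i) F i s) t.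
Proof.
move=> dF; elim: r => [|a r IHr].
  rewrite (_ : (fun s => \prod_(i <- [::] | P i) F i s) = fun=> 1); last first.
    by apply/funext => s; rewrite big_nil.
  exact: is_cderive_cderivable (is_cderive_cst _ _).
have [Pa|nPa] := boolP (P a).
  rewrite (_ : (fun s => _) = fun s => F a s * \prod_(i <- r | P i) F i s).
    by apply: cderivableM => //; apply: dF.
  by apply/funext => s; rewrite big_cons Pa.
rewrite (_ : (fun s => _) = fun s => \prod_(i <- r | P i) F i s) //.
by apply/funext => s; rewrite big_cons (negbTE nPa).
Qed.

Lemma cderivableV t f : f t != 0 -> cderivable f t -> cderivable (fun s => (f s)^-1) t.
Proof.
move=> ft0 [da db].
pose nf s := Re (f s) ^+ 2 + Im (f s) ^+ 2.
have nft0 : nf t != 0.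
  apply: contra ft0; rewrite /nf paddr_eq0 ?sqr_ge0 // !sqrf_eq0 => /andP[/eqP a0 /eqP b0].
  by case: (f t) a0 b0 => ? ? /= -> ->.
have dVnf : derivable (fun s => (nf s)^-1) t 1.
  apply: derivableV nft0 _.
  rewrite (_ : nf = (fun s => Re (f s)) * (fun s => Re (f s))
                    + (fun s => Im (f s)) * (fun s => Im (f s))); last first.
    by apply/funext => s; rewrite /nf !expr2.
  exact: derivableD (derivableM da da) (derivableM db db).
split.
  rewrite (_ : (fun s => _) = fun s => Re (f s) * (nf s)^-1); last first.
    by apply/funext => s; rewrite /nf; case: (f s).
  exact: derivableM da dVnf.
rewrite (_ : (fun s => _) = fun s => - (Im (f s) * (nf s)^-1)); last first.
  by apply/funext => s; rewrite /nf; case: (f s).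
exact: derivableN (derivableM db dVnf).
Qed.

End ComplexDerivative.

Section MatrixDerivative.
Variable R : realType.
Implicit Types (t : R).

Definition is_mxderive {a b : nat} t (F : R -> 'M[R[i]]_(a, b)) (D : 'M[R[i]]_(a, b)) :=
  forall i j, is_cderive t (fun s => F s i j) (D i j).

Lemma is_mxderive_mderivable a b t (F : R -> 'M[R[i]]_(a, b)) D :
  is_mxderive t F D -> mderivable F t.
Proof. by move=> dF i j; apply: is_cderive_cderivable (dF i j). Qed.

Lemma is_mxderive_val a b t (F : R -> 'M[R[i]]_(a, b)) D :
  is_mxderive t F D -> mderive F t = D.
Proof. by move=> dF; apply/matrixP => i j; rewrite mxE (is_cderive_val (dF i j)). Qed.

Lemma mderivable_is_mxderive a b t (F : R -> 'M[R[i]]_(a, b)) :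
  mderivable F t -> is_mxderive t F (mderive F t).
Proof. by move=> dF i j; rewrite mxE; apply: cderivable_is_cderive. Qed.

Lemma is_mxderive_ext a b t (F G : R -> 'M[R[i]]_(a, b)) D :
  (forall s, F s = G s) -> is_mxderive t F D -> is_mxderive t G D.
Proof. by move=> FG; rewrite (_ : F = G) //; apply/funext. Qed.

Lemma is_mxderive_eq a b t (F : R -> 'M[R[i]]_(a, b)) D D' :
  is_mxderive t F D' -> D' = D -> is_mxderive t F D.
Proof. by move=> ? <-. Qed.

Lemma is_mxderive_cst a b t (C : 'M[R[i]]_(a, b)) : is_mxderive t (fun=> C) 0.
Proof. by move=> i j; rewrite mxE; apply: is_cderive_cst. Qed.

Lemma is_mxderiveD a b t (F G : R -> 'M[R[i]]_(a, b)) DF DG :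
  is_mxderive t F DF -> is_mxderive t G DG ->
  is_mxderive t (fun s => F s + G s) (DF + DG).
Proof.
move=> dF dG i j; rewrite mxE.
have -> : (fun s => (F s + G s) i j) = fun s => F s i j + G s i j.
  by apply/funext => s; rewrite mxE.
exact: is_cderiveD.
Qed.

Lemma is_mxderiveN a b t (F : R -> 'M[R[i]]_(a, b)) DF :
  is_mxderive t F DF -> is_mxderive t (fun s => - F s) (- DF).
Proof.
move=> dF i j; rewrite mxE.
have -> : (fun s => (- F s) i j) = fun s => - F s i j by apply/funext => s; rewrite mxE.
exact: is_cderiveN.
Qed.

Lemma is_mxderiveB a b t (F G : R -> 'M[R[i]]_(a, b)) DF DG :
  is_mxderive t F DF -> is_mxderive t G DG ->
  is_mxderive t (fun s => F s - G s) (DF - DG).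
Proof. by move=> dF dG; apply: is_mxderiveD dF (is_mxderiveN dG). Qed.

Lemma is_mxderive_mulmx a b c t (F : R -> 'M[R[i]]_(a, b)) (G : R -> 'M[R[i]]_(b, c))
    DF (DG : 'M[R[i]]_(b, c)) :
  is_mxderive t F DF -> is_mxderive t G DG ->
  is_mxderive t (fun s => F s *m G s) (DF *m G t + F t *m DG).
Proof.
move=> dF dG i j; rewrite !mxE -big_split /=.
have -> : (fun s => (F s *m G s) i j) = fun s => \sum_k F s i k * G s k j.
  by apply/funext => s; rewrite mxE.
by apply: is_cderive_sum => k _; apply: is_cderiveM.
Qed.

Lemma is_mxderive_mulmxl a b c t (C : 'M[R[i]]_(c, a)) (F : R -> 'M[R[i]]_(a, b)) DF :
  is_mxderive t F DF -> is_mxderive t (fun s => C *m F s) (C *m DF).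
Proof.
move=> dF; apply: is_mxderive_eq (is_mxderive_mulmx (is_mxderive_cst t C) dF) _.
by rewrite mul0mx add0r.
Qed.

Lemma is_mxderive_mulmxr a b c t (F : R -> 'M[R[i]]_(a, b)) (C : 'M[R[i]]_(b, c)) DF :
  is_mxderive t F DF -> is_mxderive t (fun s => F s *m C) (DF *m C).
Proof.
move=> dF; apply: is_mxderive_eq (is_mxderive_mulmx dF (is_mxderive_cst t C)) _.
by rewrite mulmx0 addr0.
Qed.

Lemma is_mxderive_sum a b (I : Type) (r : seq I) (P : pred I) t
    (F : I -> R -> 'M[R[i]]_(a, b)) (D : I -> 'M[R[i]]_(a, b)) :
  (forall k, P k -> is_mxderive t (F k) (D k)) ->
  is_mxderive t (fun s => \sum_(k <- r | P k) F k s) (\sum_(k <- r | P k) D k).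
Proof.
move=> dF i j; rewrite summxE.
have -> : (fun s => (\sum_(k <- r | P k) F k s) i j) = fun s => \sum_(k <- r | P k) F k s i j.
  by apply/funext => s; rewrite summxE.
by apply: is_cderive_sum => k Pk; apply: dF.
Qed.

Lemma cderivable_det n (F : R -> 'M[R[i]]_n) t :
  mderivable F t -> cderivable (fun s => \det (F s)) t.
Proof.
move=> dF; apply: cderivable_sum => sigma _.
apply: cderivableM; first exact: is_cderive_cderivable (is_cderive_cst _ _).
by apply: cderivable_prod => i _; apply: dF.
Qed.

(* Entries of the inverse are cofactors divided by the determinant. *)
Lemma mderivableV n (F : R -> 'M[R[i]]_n.+1) t :
  mderivable F t -> (forall s, F s \in unitmx) -> mderivable (fun s => (F s)^-1) t.
Proof.
move=> dF Funit i j.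
have -> : (fun s => (F s)^-1 i j)
        = fun s => (\det (F s))^-1 * ((-1) ^+ (j + i) * \det (row' j (col' i (F s)))).
  by apply/funext => s; rewrite -[(F s)^-1]/(invmx (F s)) /invmx Funit !mxE.
apply: cderivableM.
  apply: cderivableV; first by rewrite -unitfE -unitmxE.
  exact: cderivable_det.
apply: cderivableM; first exact: is_cderive_cderivable (is_cderive_cst _ _).
apply: cderivable_det => a b.
rewrite (_ : (fun s => _) = fun s => F s (lift j a) (lift i b)) //.
by apply/funext => s; rewrite !mxE.
Qed.

(* Differentiating [F * F^-1 = 1]. *)
Lemma is_mxderiveV n (F : R -> 'M[R[i]]_n.+1) t D :
  is_mxderive t F D -> (forall s, F s \in unitmx) ->
  is_mxderive t (fun s => (F s)^-1) (- ((F t)^-1 * D * (F t)^-1)).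
Proof.
move=> dF Funit.
have dV := mderivable_is_mxderive (mderivableV (is_mxderive_mderivable dF) Funit).
apply: (is_mxderive_eq dV); set V' := mderive (fun s => (F s)^-1) t.
have FV0 : D *m (F t)^-1 + F t *m V' = 0.
  rewrite -(is_mxderive_val (is_mxderive_mulmx dF dV)); apply: is_mxderive_val.
  rewrite (_ : (fun s => _) = fun=> 1%:M); first exact: is_mxderive_cst.
  by apply/funext => s; rewrite mulmxE mulrV.
have FV' : F t *m V' = - (D *m (F t)^-1).
  by rewrite -[LHS](addKr (D *m (F t)^-1)) FV0 addr0.
by rewrite -[V'](mulKr (Funit t)) -mulmxE FV' mulmxN mulmxA.
Qed.

End MatrixDerivative.

(** * The matrix exponential *)

Section TaxicabNorm.
Variable R : realType.
Implicit Types (x y z : R[i]).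

Definition cnorm1 z : R := `|Re z| + `|Im z|.

Lemma cnorm1_ge0 z : 0 <= cnorm1 z.
Proof. by rewrite addr_ge0. Qed.

Lemma Re_le_cnorm1 z : `|Re z| <= cnorm1 z.
Proof. by rewrite lerDl. Qed.

Lemma cnorm1D x y : cnorm1 (x + y) <= cnorm1 x + cnorm1 y.
Proof. by rewrite /cnorm1 Re_add Im_add addrACA lerD // ler_normD. Qed.

Lemma cnorm1M x y : cnorm1 (x * y) <= cnorm1 x * cnorm1 y.
Proof.
rewrite /cnorm1 Re_mul Im_mul.
apply: le_trans (lerD (ler_normB _ _) (ler_normD _ _)) _.
by rewrite !normrM le_eqVlt; apply/orP; left; apply/eqP; ring.
Qed.

Lemma cnorm1_sum (I : Type) (r : seq I) (P : pred I) (F : I -> R[i]) :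
  cnorm1 (\sum_(k <- r | P k) F k) <= \sum_(k <- r | P k) cnorm1 (F k).
Proof.
elim/big_rec2: _ => [|k y z _ yz]; first by rewrite /cnorm1 normr0 addr0.
by apply: le_trans (cnorm1D _ _) _; rewrite lerD2l.
Qed.

Definition mxnorm1 {a b} (A : 'M[R[i]]_(a, b)) : R := \sum_i \sum_j cnorm1 (A i j).

Lemma mxnorm1_ge0 a b (A : 'M[R[i]]_(a, b)) : 0 <= mxnorm1 A.
Proof. by do 2!apply: sumr_ge0 => ? _; apply: cnorm1_ge0. Qed.

Lemma rowsum_le_mxnorm1 a b (A : 'M[R[i]]_(a, b)) i : \sum_j cnorm1 (A i j) <= mxnorm1 A.
Proof.
rewrite /mxnorm1 (bigD1 i) //= lerDl.
by do 2!apply: sumr_ge0 => ? _; apply: cnorm1_ge0.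
Qed.

Lemma cnorm1_le_mxnorm1 a b (A : 'M[R[i]]_(a, b)) i j : cnorm1 (A i j) <= mxnorm1 A.
Proof.
apply: le_trans (rowsum_le_mxnorm1 A i).
by rewrite (bigD1 j) //= lerDl; apply: sumr_ge0 => ? _; apply: cnorm1_ge0.
Qed.

Lemma mxnorm1_mulmx a b c (A : 'M[R[i]]_(a, b)) (B : 'M[R[i]]_(b, c)) :
  mxnorm1 (A *m B) <= mxnorm1 A * mxnorm1 B.
Proof.
rewrite /mxnorm1 mulr_suml; apply: ler_sum => i _; rewrite mulr_suml.
apply: le_trans (_ : \sum_j \sum_k cnorm1 (A i k) * cnorm1 (B k j) <= _).
  by apply: ler_sum => j _; rewrite mxE; apply: le_trans (cnorm1_sum _ _ _) _;
    apply: ler_sum => k _; apply: cnorm1M.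
rewrite exchange_big /=; apply: ler_sum => k _; rewrite -mulr_sumr.
by apply: ler_wpM2l; [apply: cnorm1_ge0 | apply: rowsum_le_mxnorm1].
Qed.

Lemma mxnorm1_mulmx_exp a n (A : 'M[R[i]]_(a, n.+1)) (M : 'M[R[i]]_n.+1) p :
  mxnorm1 (A *m M ^+ p) <= mxnorm1 A * mxnorm1 M ^+ p.
Proof.
elim: p => [|p IHp]; first by rewrite expr0 mulmx1 mulr1.
rewrite exprSr -mulmxE mulmxA exprSr mulrA.
apply: le_trans (mxnorm1_mulmx _ _) _.
by apply: ler_wpM2r; [apply: mxnorm1_ge0 | apply: IHp].
Qed.

End TaxicabNorm.

Lemma cvg_pseries_exp_bound (R : realType) (c : nat -> R) (C m x : R) :
  0 <= C -> 0 <= m -> (forall p, `|c p| <= C * m ^+ p / p`!%:R) -> cvgn (pseries c x).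
Proof.
move=> C0 m0 cp; apply: normed_cvg.
apply: (@series_le_cvg _ _ (C *: exp_coeff (m * `|x|))) => [p|p|p|].
- exact: normr_ge0.
- by rewrite /= mulr_ge0 // exp_coeff_ge0 // mulr_ge0.
- rewrite /= /exp_coeff /= normrM normrX.
  apply: le_trans (ler_wpM2r (exprn_ge0 p (normr_ge0 x)) (cp p)) _.
  rewrite (_ : (C *: _) p = C * ((m * `|x|) ^+ p / p`!%:R)) //.
  by rewrite exprMn le_eqVlt; apply/orP; left; apply/eqP; ring.
- exact: is_cvg_seriesZ (is_cvg_series_exp_coeff _).
Qed.

Local Open Scope classical_set_scope.

Lemma cvgn_sum (R : realType) (I : Type) (r : seq I) (u : I -> nat -> R) (l : I -> R) :
  (forall k, u k N @[N --> \oo] --> l k) ->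
  (\sum_(k <- r) u k N) @[N --> \oo] --> \sum_(k <- r) l k.
Proof. by move=> ul; apply: (@cvg_big _ _ _ _ xpredT add_continuous) => // k _; apply: ul. Qed.

Lemma Re_sum (R : realType) (I : Type) (r : seq I) (F : I -> R[i]) :
  Re (\sum_(k <- r) F k) = \sum_(k <- r) Re (F k).
Proof. by elim/big_rec2: _ => // k y z _ <-; rewrite Re_add. Qed.

Lemma complex_ext (R : realType) (z w : R[i]) : Re z = Re w -> Im z = Im w -> z = w.
Proof. by case: z; case: w => ? ? ? ? /= -> ->. Qed.

Lemma Im_entry (R : realType) a b (A : 'M[R[i]]_(a, b)) i j :
  Im (A i j) = Re (((- 'i)%:M *m A *m 1%:M) i j).
Proof. by rewrite mulmx1 mul_scalar_mx mxE; case: (A i j) => ? ? /=; ring. Qed.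

Lemma mulmx3E (R : realType) a m b (N1 : 'M[R[i]]_(a, m)) (S : 'M[R[i]]_m)
    (N2 : 'M[R[i]]_(m, b)) i j :
  (N1 *m S *m N2) i j = \sum_k \sum_l N1 i k * N2 l j * S k l.
Proof.
rewrite mxE exchange_big; apply: eq_bigr => l _; rewrite mxE big_distrl.
by apply: eq_bigr => k _; rewrite mulrAC.
Qed.

Section MatrixExponential.
Variables (R : realType) (n : nat) (M : 'M[R[i]]_n.+1).

(* Taylor coefficients of [Re (N1 e^(xM) N2)_ij]; imaginary parts reduce to these
   through [Im_entry], i.e. [Im z = Re (-i z)]. *)
Definition mexp_coef a b (N1 : 'M[R[i]]_(a, n.+1)) (N2 : 'M[R[i]]_(n.+1, b)) i j p : R :=
  Re ((N1 *m M ^+ p *m N2) i j) / p`!%:R.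

Variables (a b : nat) (N1 : 'M[R[i]]_(a, n.+1)) (N2 : 'M[R[i]]_(n.+1, b)) (i : 'I_a) (j : 'I_b).

Lemma pseries_mexp_coef x N :
  pseries (mexp_coef N1 N2 i j) x N = Re ((N1 *m mexp_partial (x%:C *: M) N *m N2) i j).
Proof.
rewrite /mexp_partial mulmx_sumr mulmx_suml summxE Re_sum /pseries /series /= big_mkord.
apply: eq_bigr => p _; rewrite exprZn scalerA -scalemxAr -scalemxAl mxE.
have -> : (p`!%:R^-1 * x%:C ^+ p : R[i]) = (p`!%:R^-1 * x ^+ p)%:C.
  by rewrite rmorphM /= rmorphXn fmorphV rmorph_nat.
rewrite Re_mul /= mul0r subr0.
by rewrite /mexp_coef; ring.
Qed.

Lemma cvg_mexp_coef x : cvgn (pseries (mexp_coef N1 N2 i j) x).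
Proof.
apply: (@cvg_pseries_exp_bound _ _ (mxnorm1 N1 * mxnorm1 N2) (mxnorm1 M)) => [||p].
- by rewrite mulr_ge0 // mxnorm1_ge0.
- exact: mxnorm1_ge0.
rewrite /mexp_coef normrM normfV normr_nat ler_wpM2r ?invr_ge0 ?ler0n //.
apply: le_trans (Re_le_cnorm1 _) _; apply: le_trans (cnorm1_le_mxnorm1 _ i j) _.
apply: le_trans (mxnorm1_mulmx _ _) _; rewrite mulrAC.
by apply: ler_wpM2r; [apply: mxnorm1_ge0 | apply: mxnorm1_mulmx_exp].
Qed.

Lemma pseries_diffs_mexp_coef :
  pseries_diffs (mexp_coef N1 N2 i j) = mexp_coef (N1 *m M) N2 i j.
Proof.
apply/funext => p; rewrite /pseries_diffs /mexp_coef exprS -mulmxE mulmxA factS natrM.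
have p1 : (1 + p%:R : R) != 0 by rewrite nat1r pnatr_eq0.
have pf : (p`!%:R : R) != 0 by rewrite pnatr_eq0 -lt0n fact_gt0.
by field; rewrite pf p1.
Qed.

End MatrixExponential.

Section MatrixExponentialProperties.
Variables (R : realType) (n : nat) (M : 'M[R[i]]_n.+1).

Lemma mexp_partial_cvg x (k l : 'I_n.+1) :
  Re (mexp_partial (x%:C *: M) N k l) @[N --> \oo] --> Re (mexp (x%:C *: M) k l) /\
  Im (mexp_partial (x%:C *: M) N k l) @[N --> \oo] --> Im (mexp (x%:C *: M) k l).
Proof.
have eRe : (fun N => Re (mexp_partial (x%:C *: M) N k l))
         = pseries (mexp_coef M 1%:M 1%:M k l) x.
  by apply/funext => N; rewrite pseries_mexp_coef mul1mx mulmx1.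
have eIm : (fun N => Im (mexp_partial (x%:C *: M) N k l))
         = pseries (mexp_coef M (- 'i)%:M 1%:M k l) x.
  by apply/funext => N; rewrite pseries_mexp_coef -Im_entry.
by rewrite mxE /= eRe eIm; split; apply: cvg_mexp_coef.
Qed.

Lemma lim_mexp_coef a b (N1 : 'M[R[i]]_(a, n.+1)) (N2 : 'M[R[i]]_(n.+1, b)) i j x :
  limn (pseries (mexp_coef M N1 N2 i j) x) = Re ((N1 *m mexp (x%:C *: M) *m N2) i j).
Proof.
pose S N := mexp_partial (x%:C *: M) N; pose c k l := N1 i k * N2 l j.
have -> : pseries (mexp_coef M N1 N2 i j) x = fun N =>
    \sum_k \sum_l (Re (c k l) * Re (S N k l) - Im (c k l) * Im (S N k l)).
  apply/funext => N; rewrite pseries_mexp_coef mulmx3E Re_sum.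
  by apply: eq_bigr => k _; rewrite Re_sum; apply: eq_bigr => l _; rewrite Re_mul.
apply: cvg_lim => //; rewrite mulmx3E Re_sum; apply: cvgn_sum => k.
rewrite Re_sum; apply: cvgn_sum => l; rewrite [X in _ --> X]Re_mul.
have [cRe cIm] := mexp_partial_cvg x k l.
exact: cvgB (cvgMl_tmp (a := Re (c k l)) cRe) (cvgMl_tmp (a := Im (c k l)) cIm).
Qed.

Lemma is_derive_Re_mexp a b (N1 : 'M[R[i]]_(a, n.+1)) (N2 : 'M[R[i]]_(n.+1, b)) i j (x : R) :
  is_derive x 1 (fun s => Re ((N1 *m mexp (s%:C *: M) *m N2) i j))
    (Re ((N1 *m M *m mexp (x%:C *: M) *m N2) i j)).
Proof.
have x_lt : `|x| < `|(`|x| + 1)| by rewrite [X in _ < X]ger0_norm ?ltrDl // addr_ge0.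
pose c := mexp_coef M N1 N2 i j.
have dc : cvgn (pseries (pseries_diffs c) (`|x| + 1)).
  by rewrite pseries_diffs_mexp_coef; apply: cvg_mexp_coef.
have ddc : cvgn (pseries (pseries_diffs (pseries_diffs c)) (`|x| + 1)).
  by rewrite !pseries_diffs_mexp_coef; apply: cvg_mexp_coef.
have c0 : cvgn (pseries c (`|x| + 1)) by apply: cvg_mexp_coef.
have := pseries_snd_diffs c0 dc ddc x_lt.
rewrite !pseries_diffs_mexp_coef ?lim_mexp_coef.
by rewrite (_ : (fun s => _) = fun s => Re ((N1 *m mexp (s%:C *: M) *m N2) i j));
  last by apply/funext => s; rewrite lim_mexp_coef.
Qed.

Lemma is_mxderive_mexp t : is_mxderive t (fun s => mexp (s%:C *: M)) (M * mexp (t%:C *: M)).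
Proof.
move=> i j; split.
  have -> : (fun s => Re (mexp (s%:C *: M) i j))
          = fun s => Re ((1%:M *m mexp (s%:C *: M) *m 1%:M) i j).
    by apply/funext => s; rewrite mul1mx mulmx1.
  rewrite -mulmxE -[M *m _]mul1mx mulmxA -[_ *m mexp (t%:C *: M)]mulmx1.
  exact: is_derive_Re_mexp.
have -> : (fun s => Im (mexp (s%:C *: M) i j))
        = fun s => Re (((- 'i)%:M *m mexp (s%:C *: M) *m 1%:M) i j).
  by apply/funext => s; rewrite Im_entry.
rewrite Im_entry -mulmxE mulmxA.
exact: is_derive_Re_mexp.
Qed.

Lemma mexp_comm (N : 'M[R[i]]_n.+1) x : GRing.comm N M ->
  N * mexp (x%:C *: M) = mexp (x%:C *: M) * N.
Proof.
move=> NM.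
have ReC a b (N1 : 'M[R[i]]_(a, n.+1)) (N2 : 'M[R[i]]_(n.+1, b)) i j :
    Re ((N1 *m N *m mexp (x%:C *: M) *m N2) i j)
    = Re ((N1 *m mexp (x%:C *: M) *m (N *m N2)) i j).
  rewrite -!lim_mexp_coef; congr (limn (pseries _ x)); apply/funext => p.
  by rewrite /mexp_coef -!mulmxA (mulmxA N) mulmxE (commrX p NM) -mulmxE !mulmxA.
apply/matrixP => i j; apply: complex_ext.
  by move: (ReC _ _ 1%:M 1%:M i j); rewrite !mul1mx !mulmx1 !mulmxE.
rewrite !Im_entry; move: (ReC _ _ ((- 'i)%:M) 1%:M i j).
by rewrite !mulmx1 -!mulmxE !mulmxA.
Qed.

End MatrixExponentialProperties.

Local Close Scope classical_set_scope.

(** * Identities in Z-modules *)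

Section ZmodNormalization.
Variable V : zmodType.

Inductive zmod_expr := ZAtom of nat | ZAdd of zmod_expr & zmod_expr | ZOpp of zmod_expr | ZZero.

Fixpoint zmod_eval (s : seq V) (e : zmod_expr) : V :=
  match e with
  | ZAtom i => nth 0 s i
  | ZAdd e1 e2 => zmod_eval s e1 + zmod_eval s e2
  | ZOpp e1 => - zmod_eval s e1
  | ZZero => 0
  end.

Fixpoint zmod_coef (e : zmod_expr) (i : nat) : int :=
  match e with
  | ZAtom j => (j == i)%:Z
  | ZAdd e1 e2 => zmod_coef e1 i + zmod_coef e2 i
  | ZOpp e1 => - zmod_coef e1 i
  | ZZero => 0
  end.

Lemma zmod_evalE s e : zmod_eval s e = \sum_(i < size s) nth 0 s i *~ zmod_coef e i.
Proof.
elim: e => [j|e1 IH1 e2 IH2|e1 IH1|] /=.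
- have [js|sj] := ltnP j (size s); last first.
    rewrite nth_default // big1 // => i _; case: eqP => [ji|]; last by rewrite mulr0z.
    by move: (ltn_ord i); rewrite -ji ltnNge sj.
  rewrite (bigD1 (Ordinal js)) //= eqxx mulr1z big1 ?addr0 // => i /eqP ij.
  by case: eqP => [ji|_]; [case: ij; apply/val_inj | rewrite mulr0z].
- by rewrite IH1 IH2 -big_split /=; apply: eq_bigr => i _; rewrite mulrzDr.
- by rewrite IH1 -sumrN; apply: eq_bigr => i _; rewrite mulrNz.
- by rewrite big1 // => i _; rewrite mulr0z.
Qed.

Lemma zmod_eval_eq s e1 e2 :
  all (fun i => zmod_coef e1 i == zmod_coef e2 i) (iota 0 (size s)) ->
  zmod_eval s e1 = zmod_eval s e2.
Proof.
move=> /allP coefE; rewrite !zmod_evalE; apply: eq_bigr => i _.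
by rewrite (eqP (coefE i _)) // mem_iota add0n ltn_ord.
Qed.

Lemma eq_lincomb (a b x y : V) : a = b -> x + (b - a) = y -> x = y.
Proof. by move=> ->; rewrite subrr addr0. Qed.

End ZmodNormalization.

Ltac zmod_find x l n :=
  lazymatch l with
  | nil => constr:(@None nat)
  | cons ?y ?l' =>
      match constr:(tt) with
      | _ => let _ := constr:(@erefl _ x : x = y) in constr:(Some n)
      | _ => zmod_find x l' (S n)
      end
  end.

Ltac zmod_reify V t l :=
  match t with
  | @GRing.add _ ?a ?b =>
      match zmod_reify V a l with (?e1, ?l1) =>
        match zmod_reify V b l1 with (?e2, ?l2) => constr:((ZAdd e1 e2, l2)) end end
  | @GRing.opp _ ?a =>
      match zmod_reify V a l with (?e1, ?l1) => constr:((ZOpp e1, l1)) end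
  | @GRing.zero _ => constr:((@ZZero, l))
  | _ =>
      match zmod_find t l 0%N with
      | Some ?i => constr:((ZAtom i, l))
      | None =>
          let n := eval cbn [size] in (size l) in
          let l' := eval cbn [cat] in (l ++ [:: (t : V)]) in
          constr:((ZAtom n, l'))
      end
  end.

(* Proves an equation between sums and differences of arbitrary terms, the
   terms being compared up to conversion. *)
Ltac zmod_eq :=
  match goal with
  | |- @eq ?V ?a ?b =>
      match zmod_reify V a (@nil V) with (?e1, ?l1) =>
        match zmod_reify V b l1 with (?e2, ?l2) =>
          change (zmod_eval l2 e1 = zmod_eval l2 e2); apply: zmod_eval_eq; vm_compute; reflexivity
        end end
  end.

(* Adds [e] with coefficient 1 or -1 to the goal; the sign is found by
   backtracking from the closing [zmod_eq]. *)
Ltac lincomb e := apply: (eq_lincomb e) + apply: (eq_lincomb (esym e)).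

Ltac mxexpand :=
  rewrite ?(mulmxDl, mulmxDr, mulmxBl, mulmxBr, mulmxN, mulNmx, mul1mx, mulmx1,
            mulmx0, mul0mx); rewrite ?mulmxA.

Section Telescoping.
Variable V : zmodType.

Lemma telescope_ord (h : nat -> V) N : \sum_(i < N) (h i.+1 - h i) = h N - h 0%N.
Proof.
elim: N => [|N IHN]; first by rewrite big_ord0 subrr.
by rewrite big_ord_recr /= IHN addrC addrA subrK.
Qed.

Lemma isum_telescope (g : int -> V) (c : V) (a b : int) :
  isum a b (fun i => g (i + 1) - g i + c) = g b - g a + c *~ (b - a).
Proof.
have shift (a' : int) : \sum_(i < `|b - a|%N) (g (a' + i%:Z + 1) - g (a' + i%:Z) + c)
    = g (a' + `|b - a|%N) - g a' + c *+ `|b - a|%N.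
  rewrite big_split /= sumr_const card_ord.
  rewrite (eq_bigr (fun i : 'I_ _ => g (a' + i.+1%:Z) - g (a' + i%:Z))).
    by rewrite (telescope_ord (fun i => g (a' + i%:Z))) addr0.
  by move=> i _; rewrite intS [1 + _]addrC addrA.
rewrite /isum; case: ifP => ab; rewrite shift pmulrn.
  by rewrite gez0_abs ?subr_ge0 // subrKC.
rewrite ltz0_abs ?subr_lt0 ?ltNge ?ab // opprB subrKC -[b - a]opprB mulrNz; zmod_eq.
Qed.

End Telescoping.

(** * Algebraic identities of the dressing *)

(* [th], [et] and [Om] are theta, eta and Omega at a fixed time.  The index [J]
   stands for [j + k - l]: quantifying over all [J] with [J + l = j + k] spares
   integer rewriting inside the shifts. *)
Section DressingIdentities.
Variables (F : fieldType) (m n : nat) (k l : int).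
Variables (th : int -> 'M[F]_(m, n.+1)) (et : int -> 'M[F]_(n.+1, m))
  (Om : int -> 'M[F]_n.+1) (P Q ga : 'M[F]_n.+1).
Hypothesis Om_unit : forall j, Om j \in unitmx.
Hypothesis Om_shift : forall j, Om (j + l) = Om j + et j *m th j.
Hypothesis th_disp : forall j J, J + l = j + k -> th (J + l) + th J = - (th j *m P).
Hypothesis et_disp : forall j J, J + l = j + k -> et (j - l) + et j = - (Q *m et J).
Hypothesis Om_disp : forall j J, J + l = j + k ->
  Q *m Om J - Om j *m P = et (j - l) *m th J.

Local Notation Oi j := (invmx (Om j)).

Lemma invOm_shift j : Oi (j + l) *m et j *m th j *m Oi j = Oi j - Oi (j + l).
Proof.
have etthE : et j *m th j = Om (j + l) - Om j by rewrite Om_shift addrC addKr.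
rewrite -[Oi (j + l) *m et j *m th j]mulmxA etthE mulmxBr mulmxBl mulVmx ?Om_unit // mul1mx.
by rewrite -mulmxA mulmxV ?Om_unit // mulmx1.
Qed.

Lemma invOm_th_disp j J : J + l = j + k ->
  th (J + l) *m Oi (J + l)
  + (th (J + l) *m Oi (J + l) *m et J - th j *m Oi j *m et (j - l) + 1%:M) *m (th J *m Oi J)
  = - (th j *m Oi j *m Q).
Proof.
move=> hJ.
have shiftE : th (J + l) *m Oi (J + l) *m et J *m th J *m Oi J
    = th (J + l) *m Oi J - th (J + l) *m Oi (J + l).
  by rewrite -mulmxBr -invOm_shift !mulmxA.
have OmE : th j *m Oi j *m (Q *m Om J) *m Oi J
    = th j *m Oi j *m (et (j - l) *m th J + Om j *m P) *m Oi J.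
  by rewrite -(Om_disp hJ) subrK.
rewrite mulmxA -[_ *m Om J *m Oi J]mulmxA mulmxV ?Om_unit // mulmx1 in OmE.
have PE : th j *m Oi j *m (Om j *m P) *m Oi J = th j *m P *m Oi J.
  by rewrite mulmxA -[th j *m Oi j *m Om j]mulmxA mulVmx ?Om_unit // mulmx1.
have thE : (th (J + l) + th J) *m Oi J = - (th j *m P) *m Oi J by rewrite (th_disp hJ).
by lincomb shiftE; lincomb OmE; lincomb PE; lincomb thE; mxexpand; zmod_eq.
Qed.

Lemma invOm_et_disp j J : J + l = j + k ->
  Oi j *m et (j - l)
  + Oi (j + l) *m et j *m (th (j + k) *m Oi (j + k) *m et J - th j *m Oi j *m et (j - l) + 1%:M)
  + P *m (Oi (j + k) *m et J) = 0.
Proof.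
move=> hJ.
have shiftE : Oi (j + l) *m et j *m th j *m Oi j *m et (j - l)
    = Oi j *m et (j - l) - Oi (j + l) *m et (j - l).
  by rewrite -mulmxBl -invOm_shift.
have OmE : Oi (j + l) *m (Q *m Om (j + k)) *m Oi (j + k) *m et J
    = Oi (j + l) *m (et j *m th (j + k) + Om (j + l) *m P) *m Oi (j + k) *m et J.
  have := Om_disp (addrAC j k l); rewrite addrK => <-.
  by rewrite subrK.
rewrite mulmxA -[_ *m Om (j + k) *m Oi (j + k)]mulmxA mulmxV ?Om_unit // mulmx1 in OmE.
have PE : Oi (j + l) *m Om (j + l) *m P *m Oi (j + k) *m et J = P *m Oi (j + k) *m et J.
  by rewrite mulVmx ?Om_unit // mul1mx.
have etE : Oi (j + l) *m (et (j - l) + et j) = Oi (j + l) *m (- (Q *m et J)).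
  by rewrite (et_disp hJ).
by lincomb shiftE; lincomb etE; lincomb OmE; lincomb PE; mxexpand; zmod_eq.
Qed.

Lemma dressed_q_rel j J : J + l = j + k -> Q *m ga = ga *m P ->
  - (th (j + k) *m Oi (j + k) *m ga)
  = - ((th (j + k) *m Oi (j + k) *m et J - th j *m Oi j *m et (j - l) + 1%:M)
       *m (- (th J *m Oi J *m ga)))
    - (- (th j *m Oi j *m ga)) *m P.
Proof.
move=> hJ gaE.
have thE := congr1 (mulmx^~ ga) (invOm_th_disp hJ); rewrite /= hJ in thE.
have QE : th j *m Oi j *m (Q *m ga) = th j *m Oi j *m (ga *m P) by rewrite gaE.
by lincomb thE; lincomb QE; mxexpand; zmod_eq.
Qed.

Lemma dressed_r_rel j J : J + l = j + k ->
  - (Oi j *m et (j - l))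
  = - (- (Oi (j + l) *m et j)
       *m (th (j + k) *m Oi (j + k) *m et J - th j *m Oi j *m et (j - l) + 1%:M))
    - P *m (- (Oi (j + k) *m et J)).
Proof.
by move=> hJ; have etE := invOm_et_disp hJ; lincomb etE; mxexpand; zmod_eq.
Qed.

Lemma dressed_phi_rel j J : J + l = j + k ->
  let u x := th x *m Oi x *m et (x - l) in
  let D x := th (x + l) *m Oi x *m et (x - l)
    - th x *m Oi x *m et (x - l) *m th x *m Oi x *m et (x - l)
    + th x *m Oi x *m ga *m Oi x *m et (x - l) - th x *m Oi x *m et (x - l - l) in
  (D (j + k) - D j) + (u (j + k) - u j + 1%:M) *m (u (J + l) - u J)
    - (u (j + l) - u j) *m (u (j + k) - u j + 1%:M)
  = (- (th (j + k) *m Oi (j + k) *m ga)) *m (- (Oi (j + k) *m et J))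
    - (- (th j *m Oi j *m ga)) *m (- (Oi j *m et (j - l))).
Proof.
move=> hJ u D; rewrite {}/D {}/u hJ.
have -> : j + k - l = J by rewrite -hJ addrK.
rewrite addrK.
have thE := congr1 (mulmx^~ (et (J - l))) (invOm_th_disp hJ); rewrite /= hJ in thE.
have etE := congr1 (mulmx (th (j + l))) (invOm_et_disp hJ).
have thE' := congr1 (mulmx^~ (Oi (j + k) *m et J)) (th_disp (addrAC j k l)).
have hJ' : J - l + l = j - l + k by rewrite subrK addrAC -hJ addrK.
have etE' := congr1 (mulmx (th j *m Oi j)) (et_disp hJ').
by lincomb thE; lincomb etE; lincomb thE'; lincomb etE'; mxexpand; zmod_eq.
Qed.

End DressingIdentities.

(* One summand of Omega, with [E] and [Et] standing for [e^(L^l t)] and [e^(-Lt^l t)]. *)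
Section SummandIdentities.
Variables (F : fieldType) (n m : nat) (k l : int).
Variables (L Lt X E Et : 'M[F]_n.+1) (A : 'M[F]_(m, n.+1)) (B : 'M[F]_(n.+1, m)).
Hypothesis L_unit : L \is a GRing.unit.
Hypothesis Lt_unit : Lt \is a GRing.unit.
Hypothesis EL : GRing.comm E L.
Hypothesis EtLt : GRing.comm Et Lt.
Hypothesis sylvester : Lt ^ (- l) * X * L ^ l - X = B *m A.

Definition summand (a b : int) := Et * Lt ^ (- a) * X * E * L ^ b.

Lemma summand_shift a b :
  summand (a + l) (b + l) - summand a b = (Et * Lt ^ (- a)) *m B *m (A *m (E * L ^ b)).
Proof.
rewrite /summand.
have -> : Lt ^ (- (a + l)) = Lt ^ (- a) * Lt ^ (- l) by rewrite -exprzDr // opprD.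
have -> : L ^ (b + l) = L ^ l * L ^ b by rewrite -exprzDr // addrC.
have -> : Et * (Lt ^ (- a) * Lt ^ (- l)) * X * E * (L ^ l * L ^ b)
    = Et * Lt ^ (- a) * (Lt ^ (- l) * X * L ^ l) * E * L ^ b.
  rewrite !mulrA; congr (_ * _); rewrite -!mulrA; congr (_ * (_ * (_ * (_ * _)))).
  exact: commrXz.
by rewrite -!mulrBl -mulrBr sylvester -!mulmxE !mulmxA.
Qed.

Lemma Lt_shift_comm a c : Lt ^ c * Et * Lt ^ (- a) = Et * Lt ^ (- (a - c)).
Proof. by rewrite -(commrXz _ EtLt) -mulrA -exprzDr // opprB addrC. Qed.

Lemma L_shift_comm b : L ^ l * E * L ^ b = E * L ^ (b + l).
Proof. by rewrite -(commrXz _ EL) -mulrA -exprzDr // addrC. Qed.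

Lemma summand_disp (P Q : 'M[F]_n.+1) j J :
  Q = - (Lt ^ k + Lt ^ (k - l)) -> P = - (L ^ k + L ^ (k - l)) -> J + l = j + k ->
  Q * summand J J - summand j j * P = (Et * Lt ^ (- (j - l))) *m B *m (A *m (E * L ^ J)).
Proof.
move=> -> -> hJ; have := summand_shift (j - l) J; rewrite subrK => <-.
have JE : J = j + k - l by rewrite -hJ addrK.
have e1 : Lt ^ k * Et * Lt ^ (- J) * X * E * L ^ J = Et * Lt ^ (- (j - l)) * X * E * L ^ J.
  by rewrite Lt_shift_comm JE; do 3!congr (_ * _); congr (_ * _ ^ _); ring.
have e2 : Lt ^ (k - l) * Et * Lt ^ (- J) * X * E * L ^ J = Et * Lt ^ (- j) * X * E * L ^ J.
  by rewrite Lt_shift_comm JE; do 3!congr (_ * _); congr (_ * _ ^ _); ring.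
have e3 : Et * Lt ^ (- j) * X * E * (L ^ j * L ^ k) = Et * Lt ^ (- j) * X * E * L ^ (J + l).
  by rewrite -exprzDr // hJ.
have e4 : Et * Lt ^ (- j) * X * E * (L ^ j * L ^ (k - l)) = Et * Lt ^ (- j) * X * E * L ^ J.
  by rewrite -exprzDr // JE; congr (_ * _ ^ _); ring.
rewrite /summand -!mulmxE in e1 e2 e3 e4 *.
by lincomb e1; lincomb e2; lincomb e3; lincomb e4; mxexpand; zmod_eq.
Qed.

Lemma theta_term_disp (P : 'M[F]_n.+1) j J :
  P = - (L ^ k + L ^ (k - l)) -> J + l = j + k ->
  A *m (E * L ^ (J + l)) + A *m (E * L ^ J) = - (A *m (E * L ^ j) *m P).
Proof.
move=> -> hJ; have JE : J = j + k - l by rewrite -hJ addrK.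
have -> : L ^ (J + l) = L ^ j * L ^ k by rewrite -exprzDr // hJ.
have -> : L ^ J = L ^ j * L ^ (k - l) by rewrite -exprzDr // JE; congr (_ ^ _); ring.
by rewrite -!mulmxE; mxexpand; zmod_eq.
Qed.

Lemma eta_term_disp (Q : 'M[F]_n.+1) a J :
  Q = - (Lt ^ k + Lt ^ (k - l)) -> J + l = a + k ->
  (Et * Lt ^ (- (a - l))) *m B + (Et * Lt ^ (- a)) *m B = - (Q *m ((Et * Lt ^ (- J)) *m B)).
Proof.
move=> -> hJ; have JE : J = a + k - l by rewrite -hJ addrK.
have -> : Et * Lt ^ (- (a - l)) = Lt ^ k * Et * Lt ^ (- J).
  by rewrite Lt_shift_comm JE; congr (_ * _ ^ _); ring.
have -> : Et * Lt ^ (- a) = Lt ^ (k - l) * Et * Lt ^ (- J).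
  by rewrite Lt_shift_comm JE; congr (_ * _ ^ _); ring.
by rewrite -!mulmxE; mxexpand; zmod_eq.
Qed.

Lemma summand_deriv a b :
  - (Lt ^ l * Et) * Lt ^ (- a) * X * E * L ^ b + Et * Lt ^ (- a) * X * (L ^ l * E) * L ^ b
  = (Et * Lt ^ (- (a - l))) *m B *m (A *m (E * L ^ b)).
Proof.
have := summand_shift (a - l) b; rewrite subrK /summand => <-.
have e1 : Lt ^ l * Et * Lt ^ (- a) * X * E * L ^ b = Et * Lt ^ (- (a - l)) * X * E * L ^ b.
  by rewrite Lt_shift_comm.
have e2 : Et * Lt ^ (- a) * X * (L ^ l * E * L ^ b) = Et * Lt ^ (- a) * X * (E * L ^ (b + l)).
  by rewrite L_shift_comm.
rewrite -!mulmxE in e1 e2 *.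
by lincomb e1; lincomb e2; mxexpand; zmod_eq.
Qed.

End SummandIdentities.

(* Keeps the conversion tests of [zmod_eq] from unfolding the exponential. *)
Local Opaque mexp.

Section Main.
Variables (R : realType) (m n : nat) (k l : int).
Variables (P Q : 'M[R[i]]_n.+1) (RP RQ : seq 'M[R[i]]_n.+1).
Hypothesis (hRP : forall L, L \in RP -> L \in unitmx /\ - (L ^ k + L ^ (k - l)) = P).
Hypothesis (hRQ : forall L, L \in RQ -> L \in unitmx /\ - (L ^ k + L ^ (k - l)) = Q).
Variables (A : 'M[R[i]]_n.+1 -> 'M[R[i]]_(m.+1, n.+1))
  (B : 'M[R[i]]_n.+1 -> 'M[R[i]]_(n.+1, m.+1))
  (X : 'M[R[i]]_n.+1 -> 'M[R[i]]_n.+1 -> 'M[R[i]]_n.+1).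
Hypothesis (hX : forall Lt L, Lt \in RQ -> L \in RP ->
  Lt ^ (- l) * X Lt L * L ^ l - X Lt L = B Lt *m A L).
Variable (om : R -> 'M[R[i]]_n.+1).
Hypothesis (hom_d : forall t, mderivable om t).
Hypothesis (hom_c : forall t, Q * om t = om t * P).
Variable (gamma2 : R -> 'M[R[i]]_n.+1).
Hypothesis (hgamma2 : forall t, gamma2 t = - mderive om t).
Variable (theta : R -> int -> 'M[R[i]]_(m.+1, n.+1)).
Hypothesis (htheta : forall t j, theta t j =
  \sum_(L <- RP) (A L *m (mexp ((t%:C) *: L ^ l) * L ^ j))).
Variable (eta : R -> int -> 'M[R[i]]_(n.+1, m.+1)).
Hypothesis (heta : forall t j, eta t j =
  \sum_(Lt <- RQ) ((mexp ((- t)%:C *: Lt ^ l) * Lt ^ (- j)) *m B Lt)).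
Variable (Om : R -> int -> 'M[R[i]]_n.+1).
Hypothesis (hOm : forall t j, Om t j =
  \sum_(L <- RP) \sum_(Lt <- RQ)
    (mexp ((- t)%:C *: Lt ^ l) * Lt ^ (- j) * X Lt L * mexp ((t%:C) *: L ^ l) * L ^ j)
  + om t).
Hypothesis (hOm_inv : forall t j, Om t j \in unitmx).

Local Notation E L s := (mexp (s%:C *: L ^ l)).
Local Notation Et Lt s := (mexp ((- s)%:C *: Lt ^ l)).

Lemma RP_unit L : L \in RP -> L \is a GRing.unit. Proof. by case/hRP. Qed.
Lemma RQ_unit L : L \in RQ -> L \is a GRing.unit. Proof. by case/hRQ. Qed.
Lemma RP_disp L : L \in RP -> P = - (L ^ k + L ^ (k - l)). Proof. by case/hRP => _ ->. Qed.
Lemma RQ_disp L : L \in RQ -> Q = - (L ^ k + L ^ (k - l)). Proof. by case/hRQ => _ ->. Qed.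

Lemma mexp_scale_comm (L : 'M[R[i]]_n.+1) x : GRing.comm (mexp (x%:C *: L ^ l)) L.
Proof. by rewrite /GRing.comm (mexp_comm _ (commrXz _ (commr_refl L))). Qed.

Section AtTime.
Variable t : R.

Lemma Om_shift j : Om t (j + l) = Om t j + eta t j *m theta t j.
Proof.
have summandsE : \sum_(L <- RP) \sum_(Lt <- RQ)
      (Et Lt t * Lt ^ (- (j + l)) * X Lt L * E L t * L ^ (j + l))
    - \sum_(L <- RP) \sum_(Lt <- RQ) (Et Lt t * Lt ^ (- j) * X Lt L * E L t * L ^ j)
    = eta t j *m theta t j.
  rewrite heta htheta mulmx_suml.
  under [in RHS]eq_bigr => Lt _ do rewrite mulmx_sumr.
  rewrite [in RHS]exchange_big -sumrB big_seq [in RHS]big_seq; apply: eq_bigr => L hL.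
  rewrite -sumrB big_seq [in RHS]big_seq; apply: eq_bigr => Lt hLt.
  exact: (summand_shift (Et Lt t) (RP_unit hL) (RQ_unit hLt) (mexp_scale_comm _ _) (hX hLt hL)).
by rewrite !hOm -summandsE; zmod_eq.
Qed.

Lemma theta_disp j J : J + l = j + k -> theta t (J + l) + theta t J = - (theta t j *m P).
Proof.
move=> hJ; rewrite !htheta -big_split mulmx_suml -sumrN big_seq [in RHS]big_seq.
by apply: eq_bigr => L hL; apply: (theta_term_disp _ _ (RP_unit hL) (RP_disp hL) hJ).
Qed.

Lemma eta_disp a J : J + l = a + k -> eta t (a - l) + eta t a = - (Q *m eta t J).
Proof.
move=> hJ; rewrite !heta -big_split mulmx_sumr -sumrN big_seq [in RHS]big_seq.
apply: eq_bigr => Lt hLt.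
exact: (eta_term_disp _ (RQ_unit hLt) (mexp_scale_comm _ _) (RQ_disp hLt) hJ).
Qed.

Lemma Om_disp j J : J + l = j + k -> Q *m Om t J - Om t j *m P = eta t (j - l) *m theta t J.
Proof.
move=> hJ.
have summandsE : Q *m (\sum_(L <- RP) \sum_(Lt <- RQ)
        (Et Lt t * Lt ^ (- J) * X Lt L * E L t * L ^ J))
    - (\sum_(L <- RP) \sum_(Lt <- RQ) (Et Lt t * Lt ^ (- j) * X Lt L * E L t * L ^ j)) *m P
    = eta t (j - l) *m theta t J.
  rewrite heta htheta mulmx_suml mulmx_sumr [X in _ - X]mulmx_suml.
  under [in RHS]eq_bigr => Lt _ do rewrite mulmx_sumr.
  rewrite [in RHS]exchange_big -sumrB big_seq [in RHS]big_seq; apply: eq_bigr => L hL.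
  rewrite mulmx_sumr mulmx_suml -sumrB big_seq [in RHS]big_seq; apply: eq_bigr => Lt hLt.
  exact: (summand_disp (RP_unit hL) (RQ_unit hLt) (mexp_scale_comm _ _) (mexp_scale_comm _ _)
    (hX hLt hL) (RQ_disp hLt) (RP_disp hL) hJ).
have om_comm : Q *m om t = om t *m P := hom_c t.
by rewrite !hOm mulmxDr mulmxDl -summandsE; lincomb om_comm; zmod_eq.
Qed.

Lemma gamma2_comm : Q *m gamma2 t = gamma2 t *m P.
Proof.
have dom := mderivable_is_mxderive (hom_d t).
have := is_mxderive_val (is_mxderive_mulmxl Q dom).
rewrite (_ : (fun s => _) = fun s => om s *m P); last by apply/funext => s; apply: hom_c.
by rewrite (is_mxderive_val (is_mxderive_mulmxr P dom)) hgamma2 mulmxN mulNmx => ->.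
Qed.

Lemma is_mxderive_Et (Lt : 'M[R[i]]_n.+1) : is_mxderive t (fun s => Et Lt s) (- Lt ^ l * Et Lt t).
Proof.
have scaleN s : (- s)%:C *: Lt ^ l = s%:C *: (- Lt ^ l) by rewrite raddfN /= scaleNr scalerN.
have := is_mxderive_mexp (- Lt ^ l) t; rewrite -scaleN.
by apply: is_mxderive_ext => s; rewrite scaleN.
Qed.

Lemma theta_deriv b : is_mxderive t (fun s => theta s b) (theta t (b + l)).
Proof.
apply: is_mxderive_ext (fun s => esym (htheta s b)) _.
apply: is_mxderive_eq.
  apply: is_mxderive_sum => L _; apply: is_mxderive_mulmxl; apply: is_mxderive_mulmxr.
  exact: is_mxderive_mexp.
rewrite htheta big_seq [in RHS]big_seq; apply: eq_bigr => L hL.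
by rewrite -(L_shift_comm _ (RP_unit hL) (mexp_scale_comm _ _)).
Qed.

Lemma eta_deriv a : is_mxderive t (fun s => eta s a) (- eta t (a - l)).
Proof.
apply: is_mxderive_ext (fun s => esym (heta s a)) _.
apply: is_mxderive_eq.
  apply: is_mxderive_sum => Lt _; apply: is_mxderive_mulmxr; apply: is_mxderive_mulmxr.
  exact: is_mxderive_Et.
rewrite heta -sumrN big_seq [in RHS]big_seq; apply: eq_bigr => Lt hLt.
by rewrite -(Lt_shift_comm (RQ_unit hLt) (mexp_scale_comm _ _) _ l) -mulmxE !mulNmx.
Qed.

Lemma Om_deriv j : is_mxderive t (fun s => Om s j) (eta t (j - l) *m theta t j - gamma2 t).
Proof.
apply: is_mxderive_ext (fun s => esym (hOm s j)) _.
apply: is_mxderive_eq.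
  apply: is_mxderiveD (mderivable_is_mxderive (hom_d t)).
  apply: is_mxderive_sum => L _; apply: is_mxderive_sum => Lt _.
  apply: is_mxderive_mulmxr; apply: is_mxderive_mulmx (is_mxderive_mexp _ t).
  by apply: is_mxderive_mulmxr; apply: is_mxderive_mulmxr; apply: is_mxderive_Et.
rewrite hgamma2 opprK; congr (_ + _).
rewrite heta htheta mulmx_suml.
under [in RHS]eq_bigr => Lt _ do rewrite mulmx_sumr.
rewrite [in RHS]exchange_big big_seq [in RHS]big_seq; apply: eq_bigr => L hL.
rewrite big_seq [in RHS]big_seq; apply: eq_bigr => Lt hLt.
rewrite -(summand_deriv (RP_unit hL) (RQ_unit hLt) (mexp_scale_comm _ _) (mexp_scale_comm _ _)
  (hX hLt hL)).
by rewrite -!mulmxE mulNmx mulmxDl.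
Qed.

End AtTime.

Variables (phi0 : 'M[R[i]]_m.+1) (phi : R -> int -> 'M[R[i]]_m.+1).
Hypothesis (hphi : forall t j, phi t j = phi0 + theta t j *m (Om t j)^-1 *m eta t (j + - l)).
Variable (qh : R -> int -> 'M[R[i]]_(m.+1, n.+1)).
Hypothesis (hqh : forall t j, qh t j = - (theta t j *m (Om t j)^-1 *m gamma2 t)).
Variable (rt : R -> int -> 'M[R[i]]_(n.+1, m.+1)).
Hypothesis (hrt : forall t j, rt t j = - ((Om t (j + l))^-1 *m eta t j)).

Lemma phi_deriv t (x : int) : is_mxderive t (fun s => phi s x)
  (theta t (x + l) *m (Om t x)^-1 *m eta t (x - l)
   - theta t x *m (Om t x)^-1 *m eta t (x - l) *m theta t x *m (Om t x)^-1 *m eta t (x - l)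
   + theta t x *m (Om t x)^-1 *m gamma2 t *m (Om t x)^-1 *m eta t (x - l)
   - theta t x *m (Om t x)^-1 *m eta t (x - l - l)).
Proof.
apply: is_mxderive_ext (fun s => esym (hphi s x)) _.
apply: is_mxderive_eq.
  apply: is_mxderiveD (is_mxderive_cst t phi0) _.
  apply: is_mxderive_mulmx (eta_deriv t (x - l)).
  exact: is_mxderive_mulmx (theta_deriv t x) (is_mxderiveV (Om_deriv t x) (hOm_inv^~ x)).
move: (theta t (x + l)) (theta t x) ((Om t x)^-1) (eta t (x - l)) (eta t (x - l - l)) (gamma2 t).
by move=> th th' Oi et et' ga; rewrite -!mulmxE; mxexpand; zmod_eq.
Qed.

Lemma phi_sub t (x y : int) : phi t x - phi t y
  = theta t x *m (Om t x)^-1 *m eta t (x - l) - theta t y *m (Om t y)^-1 *m eta t (y - l).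
Proof. by rewrite !hphi [phi0 + _]addrC addrKA. Qed.

Lemma shift_k_l (j : int) : j + (k - l) + l = j + k. Proof. by rewrite -addrA subrK. Qed.

Lemma phi_evolution t (j : int) :
  mderivable (fun s => phi s (j + k) - phi s j) t /\
  mderive (fun s => phi s (j + k) - phi s j) t
    + (phi t (j + k) - phi t j + 1) * (phi t (j + (k - l) + l) - phi t (j + (k - l)))
    - (phi t (j + l) - phi t j) * (phi t (j + k) - phi t j + 1)
  = qh t (j + k) *m rt t (j + k + - l) - qh t j *m rt t (j + - l).
Proof.
have dphi := is_mxderiveB (phi_deriv t (j + k)) (phi_deriv t j).
split; first exact: is_mxderive_mderivable dphi.
rewrite (is_mxderive_val dphi) !phi_sub !hqh !hrt !subrK -[j + k - l]addrA -!mulmxE.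
have := dressed_phi_rel (gamma2 t) (hOm_inv t) (Om_shift t) (theta_disp t) (eta_disp t)
  (Om_disp t) (shift_k_l j).
by rewrite /= -[j + k - l]addrA; apply.
Qed.

Lemma qh_recursion t (j : int) :
  qh t (j + k) = - ((phi t (j + k) - phi t j + 1) *m qh t (j + (k - l))) - qh t j *m P.
Proof.
rewrite !hqh phi_sub -[j + k - l]addrA.
have rel := dressed_q_rel (hOm_inv t) (Om_shift t) (theta_disp t) (Om_disp t) (shift_k_l j)
  (gamma2_comm t).
exact: rel.
Qed.

Lemma rt_recursion t (j : int) :
  rt t (j + - l) = - (rt t j *m (phi t (j + k) - phi t j + 1)) - P *m rt t (j + (k - l)).
Proof.
rewrite !hrt phi_sub subrK shift_k_l -[j + k - l]addrA.
have rel := dressed_r_rel (hOm_inv t) (Om_shift t) (eta_disp t) (Om_disp t) (shift_k_l j).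
exact: rel.
Qed.

Hypothesis (hk : 0 < k).
Variable (W : R -> int -> 'M[R[i]]_m.+1).
Hypothesis (hW : forall t j, W t j = phi t (j + 1) - phi t j + (k%:~R)^-1%:M).

Let c : 'M[R[i]]_m.+1 := (k%:~R)^-1%:M.

Lemma isum_W t (j a b : int) :
  isum a b (fun i => W t (j + i)) = phi t (j + b) - phi t (j + a) + c *~ (b - a).
Proof.
rewrite (_ : (fun i => _) = fun i => phi t (j + (i + 1)) - phi t (j + i) + c).
  exact: (isum_telescope (fun i => phi t (j + i))).
by apply/funext => i; rewrite hW addrA.
Qed.

Lemma isum_W_0k t (j : int) : isum 0 k (fun i => W t (j + i)) = phi t (j + k) - phi t j + 1.
Proof.
by rewrite isum_W addr0 subr0 /c -raddfMz /= -mulrzr mulVf // intr_eq0 gt_eqF.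
Qed.

Lemma W_evolution t (j : int) :
  mderivable (fun s => isum 0 k (fun i => W s (j + i))) t /\
  mderive (fun s => isum 0 k (fun i => W s (j + i))) t
    + isum 0 k (fun i => W t (j + i)) * isum (k - l) k (fun i => W t (j + i))
    - isum 0 l (fun i => W t (j + i)) * isum 0 k (fun i => W t (j + i))
  = qh t (j + k) *m rt t (j + k + - l) - qh t j *m rt t (j + - l).
Proof.
have dphi := is_mxderiveB (phi_deriv t (j + k)) (phi_deriv t j).
have dW : is_mxderive t (fun s => isum 0 k (fun i => W s (j + i)))
    (mderive (fun s => phi s (j + k) - phi s j) t).
  apply: is_mxderive_ext (fun s => esym (isum_W_0k s j)) _.
  rewrite (is_mxderive_val dphi) -[X in is_mxderive _ _ X]add0r.
  by rewrite (_ : (fun s => _) = fun s => 1 + (phi s (j + k) - phi s j));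
    [apply: is_mxderiveD (is_mxderive_cst t 1) dphi | apply/funext => s; rewrite addrC].
split; first exact: is_mxderive_mderivable dW.
have [_ <-] := phi_evolution t j.
rewrite (is_mxderive_val dW) isum_W_0k !isum_W subKr addr0 subr0 shift_k_l.
set D := phi t (j + k) - phi t j + 1.
have cD : D * (c *~ l) = c *~ l * D.
  by apply: commrMz; rewrite /GRing.comm /c -!mulmxE scalar_mxC.
by rewrite [D * (_ + c *~ l)]mulrDr [(_ + c *~ l) * D]mulrDl cD; zmod_eq.
Qed.

Lemma W_qh_recursion t (j : int) :
  qh t (j + k) = - (isum 0 k (fun i => W t (j + i)) *m qh t (j + (k - l))) - qh t j *m P.
Proof. by rewrite isum_W_0k; apply: qh_recursion. Qed.

Lemma W_rt_recursion t (j : int) :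
  rt t (j + - l) = - (rt t j *m isum 0 k (fun i => W t (j + i))) - P *m rt t (j + (k - l)).
Proof. by rewrite isum_W_0k; apply: rt_recursion. Qed.

End Main.

Unset Implicit Arguments.

(* Sizes [m.+1] and [n.+1] encode [m, n >= 1]; a function of [(t, j)] has type
   [R -> int -> matrix], and its shift [f_(s)] is [fun t j => f t (j + s)]. *)
Theorem mainTheorem4 (R : realType) (m n : nat) (k l : int) (hk : (0 < k)%R)
  (P Q : 'M[R[i]]_n.+1)
  (RP RQ : seq 'M[R[i]]_n.+1)
  (hRPu : uniq RP) (hRQu : uniq RQ)
  (hRP : forall L, L \in RP -> L \in unitmx /\ - (L ^ k + L ^ (k - l)) = P)
  (hRQ : forall L, L \in RQ -> L \in unitmx /\ - (L ^ k + L ^ (k - l)) = Q)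
  (A : 'M[R[i]]_n.+1 -> 'M[R[i]]_(m.+1, n.+1))
  (B : 'M[R[i]]_n.+1 -> 'M[R[i]]_(n.+1, m.+1))
  (X : 'M[R[i]]_n.+1 -> 'M[R[i]]_n.+1 -> 'M[R[i]]_n.+1)
  (hX : forall Lt L, Lt \in RQ -> L \in RP ->
          Lt ^ (- l) * X Lt L * L ^ l - X Lt L = B Lt *m A L)
  (om : R -> 'M[R[i]]_n.+1)
  (hom_d : forall t, mderivable om t)
  (hom_c : forall t, Q * om t = om t * P)
  (gamma2 : R -> 'M[R[i]]_n.+1)
  (hgamma2 : forall t, gamma2 t = - mderive om t)
  (theta : R -> int -> 'M[R[i]]_(m.+1, n.+1))
  (htheta : forall t j, theta t j =
     \sum_(L <- RP) (A L *m (mexp ((t%:C) *: L ^ l) * L ^ j)))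
  (eta : R -> int -> 'M[R[i]]_(n.+1, m.+1))
  (heta : forall t j, eta t j =
     \sum_(Lt <- RQ) ((mexp ((- t)%:C *: Lt ^ l) * Lt ^ (- j)) *m B Lt))
  (Om : R -> int -> 'M[R[i]]_n.+1)
  (hOm : forall t j, Om t j =
     \sum_(L <- RP) \sum_(Lt <- RQ)
        (mexp ((- t)%:C *: Lt ^ l) * Lt ^ (- j) * X Lt L
           * mexp ((t%:C) *: L ^ l) * L ^ j)
     + om t)
  (hOm_inv : forall t j, Om t j \in unitmx)
  (phi0 : 'M[R[i]]_m.+1)
  (phi : R -> int -> 'M[R[i]]_m.+1)
  (hphi : forall t j, phi t j = phi0 + theta t j *m (Om t j)^-1 *m eta t (j + - l))
  (qh : R -> int -> 'M[R[i]]_(m.+1, n.+1))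
  (hqh : forall t j, qh t j = - (theta t j *m (Om t j)^-1 *m gamma2 t))
  (rt : R -> int -> 'M[R[i]]_(n.+1, m.+1))
  (hrt : forall t j, rt t j = - ((Om t (j + l))^-1 *m eta t j))
  (W : R -> int -> 'M[R[i]]_m.+1)
  (hW : forall t j, W t j = phi t (j + 1) - phi t j + (k%:~R)^-1%:M) :
  (forall t j,
     mderivable (fun s => phi s (j + k) - phi s j) t /\
     mderive (fun s => phi s (j + k) - phi s j) t
       + (phi t (j + k) - phi t j + 1)
           * (phi t (j + (k - l) + l) - phi t (j + (k - l)))
       - (phi t (j + l) - phi t j) * (phi t (j + k) - phi t j + 1)
     = qh t (j + k) *m rt t (j + k + - l) - qh t j *m rt t (j + - l))
  /\ (forall t j,
     qh t (j + k) = - ((phi t (j + k) - phi t j + 1) *m qh t (j + (k - l)))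
                    - qh t j *m P)
  /\ (forall t j,
     rt t (j + - l) = - (rt t j *m (phi t (j + k) - phi t j + 1))
                      - P *m rt t (j + (k - l)))
  /\ (forall t j,
     mderivable (fun s => isum 0 k (fun i => W s (j + i))) t /\
     mderive (fun s => isum 0 k (fun i => W s (j + i))) t
       + isum 0 k (fun i => W t (j + i)) * isum (k - l) k (fun i => W t (j + i))
       - isum 0 l (fun i => W t (j + i)) * isum 0 k (fun i => W t (j + i))
     = qh t (j + k) *m rt t (j + k + - l) - qh t j *m rt t (j + - l))
  /\ (forall t j,
     qh t (j + k) = - (isum 0 k (fun i => W t (j + i)) *m qh t (j + (k - l)))
                    - qh t j *m P)
  /\ (forall t j,
     rt t (j + - l) = - (rt t j *m isum 0 k (fun i => W t (j + i)))
                      - P *m rt t (j + (k - l))).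
Proof.
split; [|split; [|split; [|split; [|split]]]] => t j.
- exact (phi_evolution hRP hRQ hX hom_d hom_c hgamma2 htheta heta hOm hOm_inv hphi hqh hrt t j).
- exact (qh_recursion hRP hRQ hX hom_d hom_c hgamma2 htheta heta hOm hOm_inv hphi hqh t j).
- exact (rt_recursion hRP hRQ hX hom_c htheta heta hOm hOm_inv hphi hrt t j).
- exact (W_evolution hRP hRQ hX hom_d hom_c hgamma2 htheta heta hOm hOm_inv hphi hqh hrt
    hk hW t j).
- exact (W_qh_recursion hRP hRQ hX hom_d hom_c hgamma2 htheta heta hOm hOm_inv hphi hqh
    hk hW t j).
- exact (W_rt_recursion hRP hRQ hX hom_c htheta heta hOm hOm_inv hphi hrt hk hW t j).
Qed.
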